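(* Let $\mathcal{X}$ be a finite nonempty set of types and $\Phi=(\Phi_{xy})_{x,y\in\mathcal{X}}$ a real matrix with $\Phi_{xy}=\Phi_{yx}$. Let $(n^k)_{k\ge1}$ be a sequence of vectors of nonnegative integers $n^k=(n^k_x)_{x\in\mathcal{X}}$ with $N^k=\sum_x n^k_x\to\infty$ and $n^k_x/N^k\to f_x$ for each $x$, as $k\to\infty$. Then $$\lim_{k\to\infty}\frac{\mathcal{W}_{\mathcal{P}}(n^k,\Phi)}{N^k}=\lim_{k\to\infty}\frac{\mathcal{W}_{\mathcal{B}}(n^k,n^k,\Phi/2)}{N^k}=\mathcal{W}_{\mathcal{B}}(f,f,\Phi/2).$$
   Context: Feasible roommate matchings: $\mathcal{P}(n)=\{\mu=(\mu_{xy})_{x,y\in\mathcal{X}}:\ \mu_{xy}\in\mathbb{N},\ \mu_{xy}=\mu_{yx},\ 2\mu_{xx}+\sum_{y\neq x}\mu_{xy}\le n_x\ \forall x\}$; total surplus $S_R(\mu;\Phi)=\sum_x\mu_{xx}\Phi_{xx}+\sum_{x\neq y}\mu_{xy}\Phi_{xy}/2$; $\mathcal{W}_{\mathcal{P}}(n,\Phi)=\max_{\mu\in\mathcal{P}(n)}S_R(\mu;\Phi)$. For integer $n$, $\mathcal{B}(n,n)=\{\nu\in\mathbb{N}^{\mathcal{X}\times\mathcal{X}}:\ \sum_y\nu_{xy}\le n_x\ \forall x,\ \sum_x\nu_{xy}\le n_y\ \forall y\}$ and $\mathcal{W}_{\mathcal{B}}(n,n,\Phi/2)=\max_{\nu\in\mathcal{B}(n,n)}\sum_{x,y}\nu_{xy}\Phi_{xy}/2$.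 For a vector $f$ of nonnegative reals, $\mathcal{W}_{\mathcal{B}}(f,f,\Phi/2)$ is defined by the same maximization with $\nu_{xy}\in\mathbb{N}$ replaced by $\nu_{xy}\ge0$ real (a linear program). *)

From HB Require Import structures.
From mathcomp Require Import all_boot all_order all_algebra.
From mathcomp Require Import all_classical all_reals all_analysis.
Set Implicit Arguments. Unset Strict Implicit. Unset Printing Implicit Defensive.
Import Order.TTheory GRing.Theory Num.Theory.
Local Open Scope ring_scope.
Local Open Scope classical_set_scope.

Section Defs.
Variables (R : realType) (X : finType).

Definition roommate_feasible (n : X -> nat) (mu : X -> X -> nat) : Prop :=
  (forall x y, mu x y = mu y x) /\
  (forall x, (2 * mu x x + \sum_(y | y != x) mu x y <= n x)%N).

Definition S_R (mu : X -> X -> nat) (Phi : X -> X -> R) : R :=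
  \sum_x (mu x x)%:R * Phi x x
  + \sum_x \sum_(y | y != x) (mu x y)%:R * Phi x y / 2.

(* W_P(n, Phi) = max over P(n) (finite nonempty set, so sup = max). *)
Definition W_P (n : X -> nat) (Phi : X -> X -> R) : R :=
  sup [set S_R mu Phi | mu in [set mu | roommate_feasible n mu]].

Definition bip_feasible_nat (n m : X -> nat) (nu : X -> X -> nat) : Prop :=
  (forall x, (\sum_y nu x y <= n x)%N) /\ (forall y, (\sum_x nu x y <= m y)%N).

Definition W_B_nat (n m : X -> nat) (Psi : X -> X -> R) : R :=
  sup [set \sum_x \sum_y (nu x y)%:R * Psi x y
      | nu in [set nu | bip_feasible_nat n m nu]].

Definition bip_feasible_real (f g : X -> R) (nu : X -> X -> R) : Prop :=
  (forall x y, 0 <= nu x y) /\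
  (forall x, \sum_y nu x y <= f x) /\ (forall y, \sum_x nu x y <= g y).

Definition W_B_real (f g : X -> R) (Psi : X -> X -> R) : R :=
  sup [set \sum_x \sum_y nu x y * Psi x y
      | nu in [set nu | bip_feasible_real f g nu]].

End Defs.

From HB Require Import structures.
From mathcomp Require Import all_boot all_order all_algebra.
From mathcomp Require Import all_classical all_reals all_analysis.
From mathcomp Require Import zify ring lra.
Set Implicit Arguments. Unset Strict Implicit. Unset Printing Implicit Defensive.
Import Order.TTheory GRing.Theory Num.Theory numFieldNormedType.Exports.
Local Open Scope ring_scope.
Local Open Scope classical_set_scope.

(* A roommate matching is the same thing as a symmetric bipartite matching of
   the population with itself (a same-type pair uses two units of capacity), and
   symmetrizing and halving an integer bipartite matching, rounding down, loses
   at most the l1 norm of Phi/2; so W_P and W_B(n, n) differ by a bounded amount.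
   Rounding a fractional matching with integer margins down loses at most the
   same amount. The LP value is homogeneous in the margins, and Lipschitz in
   them: shrinking row x by min(1, h_x/g_x) and column y by min(1, h_y/g_y)
   turns a matching for the margins g into one for h. Hence both normalized
   welfares are within O(sum_x |n_x/N - f_x| + 1/N) of W_B(f, f, Phi/2). *)

Lemma le_sup_image (R : realType) (T : Type) (A : set T) (F : T -> R) (b : R) (a : T) :
  (forall a, A a -> F a <= b) -> A a -> F a <= sup [set F a | a in A].
Proof.
move=> Fb Aa; apply: ub_le_sup; last by exists a.
by exists b => _ [a' Aa' <-]; exact: Fb.
Qed.

Lemma sup_image_le (R : realType) (T : Type) (A : set T) (F : T -> R) (b : R) (a0 : T) :
  A a0 -> (forall a, A a -> F a <= b) -> sup [set F a | a in A] <= b.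
Proof.
move=> Aa0 Fb; apply: ge_sup; first by exists (F a0), a0.
by move=> _ [a Aa <-]; exact: Fb.
Qed.

Section BipartiteSurplus.
Variables (R : realType) (X : finType).
Implicit Types (Psi nu : X -> X -> R).

Definition bip_surplus Psi nu : R := \sum_x \sum_y nu x y * Psi x y.

Definition l1norm Psi : R := \sum_x \sum_y `|Psi x y|.

Lemma l1norm_ge0 Psi : 0 <= l1norm Psi.
Proof. by do 2![apply: sumr_ge0 => ? _]. Qed.

Lemma ler_norm_l1norm Psi x y : `|Psi x y| <= l1norm Psi.
Proof.
rewrite /l1norm (bigD1 x) //= (bigD1 y) //= -addrA lerDl.
by rewrite addr_ge0 ?sumr_ge0 // => z _; rewrite sumr_ge0.
Qed.

Lemma bip_surplusZ Psi nu c :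
  bip_surplus Psi (fun x y => nu x y * c) = bip_surplus Psi nu * c.
Proof.
rewrite /bip_surplus mulr_suml; apply: eq_bigr => x _; rewrite mulr_suml.
by apply: eq_bigr => y _; rewrite mulrAC.
Qed.

Lemma bip_surplus_le (g1 g2 : X -> R) Psi nu : bip_feasible_real g1 g2 nu ->
  bip_surplus Psi nu <= \sum_x \sum_y g1 x * `|Psi x y|.
Proof.
move=> [nu_ge0 [row _]]; apply: ler_sum => x _; apply: ler_sum => y _.
apply: le_trans (ler_wpM2l (nu_ge0 x y) (ler_norm _)) _.
apply: ler_wpM2r => //; apply: le_trans (row x).
by rewrite (bigD1 y) //= lerDl sumr_ge0.
Qed.

Lemma bip_feasible_real0 (g1 g2 : X -> R) :
  (forall x, 0 <= g1 x) -> (forall y, 0 <= g2 y) -> bip_feasible_real g1 g2 (fun _ _ => 0).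
Proof. by move=> g1_ge0 g2_ge0; split=> //; split=> ?; rewrite big1. Qed.

Lemma bip_feasible_realZ (g1 g2 : X -> R) nu (c : R) : 0 < c ->
  bip_feasible_real (fun x => g1 x * c) (fun y => g2 y * c) (fun x y => nu x y * c)
  <-> bip_feasible_real g1 g2 nu.
Proof.
move=> c_gt0.
have ge0E x y : (0 <= nu x y * c) = (0 <= nu x y) by rewrite pmulr_lge0.
have rowE x : (\sum_y nu x y * c <= g1 x * c) = (\sum_y nu x y <= g1 x).
  by rewrite -mulr_suml ler_pM2r.
have colE y : (\sum_x nu x y * c <= g2 y * c) = (\sum_x nu x y <= g2 y).
  by rewrite -mulr_suml ler_pM2r.
split=> -[nu_ge0 [row col]]; split=> [x y|]; try split=> [x|y].
- by rewrite -ge0E.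
- by rewrite -rowE.
- by rewrite -colE.
- by rewrite ge0E.
- by rewrite rowE.
- by rewrite colE.
Qed.

End BipartiteSurplus.

Section MarginShrinking.
Variables (R : realType) (X : finType).

Definition shrink (g h : X -> R) x : R := if h x < g x then h x / g x else 1.

Variables (g h : X -> R).
Hypothesis h_ge0 : forall x, 0 <= h x.

Lemma shrink_ge0 x : 0 <= shrink g h x.
Proof.
rewrite /shrink; case: ltP => // hg.
by rewrite divr_ge0 // ltW // (le_lt_trans (h_ge0 x) hg).
Qed.

Lemma shrink_le1 x : shrink g h x <= 1.
Proof.
rewrite /shrink; case: ltP => // hg.
by rewrite ler_pdivrMr ?mul1r; [exact: ltW | exact: le_lt_trans (h_ge0 x) hg].
Qed.

Lemma shrink_mul_le x : shrink g h x * g x <= h x.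
Proof.
rewrite /shrink; case: ltP => [hg|]; last by rewrite mul1r.
by rewrite divfK // gt_eqF // (le_lt_trans (h_ge0 x) hg).
Qed.

Lemma shrink_defect x : (1 - shrink g h x) * g x <= `|g x - h x|.
Proof.
rewrite /shrink; case: ltP => [hg|_]; last by rewrite subrr mul0r.
by rewrite mulrBl mul1r divfK ?ler_norm // gt_eqF // (le_lt_trans (h_ge0 x) hg).
Qed.

End MarginShrinking.

Section MarginPerturbation.
Variables (R : realType) (X : finType).
Variables (g1 g2 h1 h2 : X -> R) (nu : X -> X -> R).
Hypotheses (h1_ge0 : forall x, 0 <= h1 x) (h2_ge0 : forall y, 0 <= h2 y).
Hypothesis nu_feas : bip_feasible_real g1 g2 nu.

Local Notation a := (shrink g1 h1).
Local Notation b := (shrink g2 h2).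

Let a_ge0 x : 0 <= a x := shrink_ge0 g1 h1_ge0 x.
Let a_le1 x : a x <= 1 := shrink_le1 g1 h1_ge0 x.
Let b_ge0 y : 0 <= b y := shrink_ge0 g2 h2_ge0 y.
Let b_le1 y : b y <= 1 := shrink_le1 g2 h2_ge0 y.

Lemma bip_feasible_real_shrink :
  bip_feasible_real h1 h2 (fun x y => a x * b y * nu x y).
Proof.
have [nu_ge0 [row col]] := nu_feas.
split; first by move=> x y; rewrite !mulr_ge0.
split=> [x|y].
- under eq_bigr do rewrite -mulrA.
  rewrite -mulr_sumr; apply: le_trans (shrink_mul_le g1 h1_ge0 x).
  apply: ler_wpM2l => //; apply: le_trans (row x).
  by apply: ler_sum => y _; exact: ler_piMl.
- under eq_bigr do rewrite mulrAC.
  rewrite -mulr_suml mulrC; apply: le_trans (shrink_mul_le g2 h2_ge0 y).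
  apply: ler_wpM2l => //; apply: le_trans (col y).
  by apply: ler_sum => x _; exact: ler_piMl.
Qed.

Lemma bip_surplus_shrink (Psi : X -> X -> R) :
  bip_surplus Psi nu - l1norm Psi * (\sum_x `|g1 x - h1 x| + \sum_y `|g2 y - h2 y|)
    <= bip_surplus Psi (fun x y => a x * b y * nu x y).
Proof.
have [nu_ge0 [row col]] := nu_feas.
set M := l1norm Psi.
have term x y : nu x y * Psi x y - a x * b y * nu x y * Psi x y
    <= M * ((1 - a x) * nu x y + (1 - b y) * nu x y).
  have ab_loss : 1 - a x * b y <= (1 - a x) + (1 - b y).
    have : 0 <= (1 - a x) * (1 - b y) by rewrite mulr_ge0 // subr_ge0.
    lra.
  have ab_ge0 : 0 <= 1 - a x * b y by rewrite subr_ge0 mulr_ile1.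
  have nuPsi : nu x y * Psi x y <= nu x y * M.
    by apply: ler_wpM2l => //; exact: le_trans (ler_norm _) (ler_norm_l1norm _ _ _).
  apply: (@le_trans _ _ ((1 - a x * b y) * (nu x y * M))).
    have -> : nu x y * Psi x y - a x * b y * nu x y * Psi x y
              = (1 - a x * b y) * (nu x y * Psi x y) by ring.
    exact: ler_wpM2l.
  have -> : M * ((1 - a x) * nu x y + (1 - b y) * nu x y)
            = ((1 - a x) + (1 - b y)) * (nu x y * M) by ring.
  by apply: ler_wpM2r ab_loss; rewrite mulr_ge0 ?l1norm_ge0.
have rows : \sum_x \sum_y (1 - a x) * nu x y <= \sum_x `|g1 x - h1 x|.
  apply: ler_sum => x _; rewrite -mulr_sumr.
  apply: le_trans (shrink_defect g1 h1_ge0 x).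
  by apply: (ler_wpM2l _ (row x)); rewrite subr_ge0.
have cols : \sum_x \sum_y (1 - b y) * nu x y <= \sum_y `|g2 y - h2 y|.
  rewrite exchange_big; apply: ler_sum => y _; rewrite -mulr_sumr.
  apply: le_trans (shrink_defect g2 h2_ge0 y).
  by apply: (ler_wpM2l _ (col y)); rewrite subr_ge0.
have loss : bip_surplus Psi nu - bip_surplus Psi (fun x y => a x * b y * nu x y)
    <= M * (\sum_x \sum_y (1 - a x) * nu x y + \sum_x \sum_y (1 - b y) * nu x y).
  rewrite /bip_surplus -sumrB -big_split mulr_sumr; apply: ler_sum => x _.
  by rewrite -sumrB -big_split mulr_sumr; apply: ler_sum => y _; exact: term.
have := ler_wpM2l (l1norm_ge0 Psi) (lerD rows cols); rewrite -/M; lra.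
Qed.

End MarginPerturbation.

Section BipartiteWelfare.
Variables (R : realType) (X : finType).
Implicit Types (Psi nu : X -> X -> R).

Lemma W_B_real_ge (g1 g2 : X -> R) Psi nu :
  bip_feasible_real g1 g2 nu -> bip_surplus Psi nu <= W_B_real g1 g2 Psi.
Proof.
apply: (le_sup_image (F := bip_surplus Psi) (b := \sum_x \sum_y g1 x * `|Psi x y|)).
exact: bip_surplus_le.
Qed.

Lemma W_B_real_le (g1 g2 : X -> R) Psi (b : R) :
  (forall x, 0 <= g1 x) -> (forall y, 0 <= g2 y) ->
  (forall nu, bip_feasible_real g1 g2 nu -> bip_surplus Psi nu <= b) ->
  W_B_real g1 g2 Psi <= b.
Proof. by move=> g1_ge0 g2_ge0; apply: sup_image_le (bip_feasible_real0 g1_ge0 g2_ge0). Qed.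

Lemma W_B_real_perturb (g1 g2 h1 h2 : X -> R) Psi :
  (forall x, 0 <= g1 x) -> (forall y, 0 <= g2 y) ->
  (forall x, 0 <= h1 x) -> (forall y, 0 <= h2 y) ->
  W_B_real g1 g2 Psi - l1norm Psi * (\sum_x `|g1 x - h1 x| + \sum_y `|g2 y - h2 y|)
    <= W_B_real h1 h2 Psi.
Proof.
move=> g1_ge0 g2_ge0 h1_ge0 h2_ge0; rewrite lerBlDr.
apply: W_B_real_le => // nu nu_feas.
have := bip_surplus_shrink h1_ge0 h2_ge0 nu_feas Psi.
have := W_B_real_ge Psi (bip_feasible_real_shrink h1_ge0 h2_ge0 nu_feas).
lra.
Qed.

Lemma W_B_realZ (g1 g2 : X -> R) Psi (c : R) :
  (forall x, 0 <= g1 x) -> (forall y, 0 <= g2 y) -> 0 < c ->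
  W_B_real (fun x => g1 x * c) (fun y => g2 y * c) Psi = W_B_real g1 g2 Psi * c.
Proof.
move=> g1_ge0 g2_ge0 c_gt0; apply/eqP; rewrite eq_le; apply/andP; split.
  have c_ge0 := ltW c_gt0.
  apply: W_B_real_le => [x|y|nu]; [exact: mulr_ge0 | exact: mulr_ge0 |].
  have -> : nu = (fun x y => nu x y / c * c).
    by apply/funext => x; apply/funext => y; rewrite divfK ?gt_eqF.
  move/(bip_feasible_realZ _ _ _ c_gt0) => nu_feas.
  by rewrite bip_surplusZ ler_pM2r //; exact: W_B_real_ge.
rewrite -ler_pdivlMr //; apply: W_B_real_le => // nu nu_feas.
rewrite ler_pdivlMr // -bip_surplusZ; apply: W_B_real_ge.
exact/bip_feasible_realZ.
Qed.

Lemma bip_feasible_real_nat (n m : X -> nat) (nu : X -> X -> nat) :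
  bip_feasible_nat n m nu ->
  bip_feasible_real (fun x => (n x)%:R : R) (fun y => (m y)%:R) (fun x y => (nu x y)%:R).
Proof.
by move=> [row col]; split=> //; split=> ?; rewrite -natr_sum ler_nat.
Qed.

Lemma W_B_nat_ge (n m : X -> nat) Psi (nu : X -> X -> nat) :
  bip_feasible_nat n m nu -> bip_surplus Psi (fun x y => (nu x y)%:R) <= W_B_nat n m Psi.
Proof.
apply: (le_sup_image
  (F := fun nu : X -> X -> nat => bip_surplus Psi (fun x y => (nu x y)%:R))
  (b := \sum_x \sum_y (n x)%:R * `|Psi x y|)).
by move=> nu' /bip_feasible_real_nat; exact: bip_surplus_le.
Qed.

Lemma W_B_nat_le (n m : X -> nat) Psi (b : R) :
  (forall nu : X -> X -> nat,
     bip_feasible_nat n m nu -> bip_surplus Psi (fun x y => (nu x y)%:R) <= b) ->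
  W_B_nat n m Psi <= b.
Proof. by apply: sup_image_le (fun _ _ => 0%N) _; split=> ?; rewrite big1. Qed.

Lemma W_B_nat_le_real (n m : X -> nat) Psi :
  W_B_nat n m Psi <= W_B_real (fun x => (n x)%:R) (fun y => (m y)%:R) Psi.
Proof. by apply: W_B_nat_le => nu /bip_feasible_real_nat; exact: W_B_real_ge. Qed.

Lemma bip_feasible_nat_truncn (n m : X -> nat) nu :
  bip_feasible_real (fun x => (n x)%:R) (fun y => (m y)%:R) nu ->
  bip_feasible_nat n m (fun x y => Num.truncn (nu x y)).
Proof.
move=> [nu_ge0 [row col]]; split=> [x|y]; rewrite -(ler_nat R) natr_sum.
  by apply: le_trans (row x); apply: ler_sum => y _; rewrite truncn_le.
by apply: le_trans (col y); apply: ler_sum => x _; rewrite truncn_le.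
Qed.

Lemma bip_surplus_truncn Psi nu : (forall x y, 0 <= nu x y) ->
  bip_surplus Psi nu - l1norm Psi <= bip_surplus Psi (fun x y => (Num.truncn (nu x y))%:R).
Proof.
move=> nu_ge0; rewrite lerBlDl -lerBlDr /bip_surplus /l1norm -sumrB.
apply: ler_sum => x _; rewrite -sumrB; apply: ler_sum => y _.
have /andP[trunc_le lt_trunc] := truncn_itv (nu_ge0 x y).
rewrite -mulrBl; apply: le_trans (ler_wpM2l _ (ler_norm _)) _; first by rewrite subr_ge0.
by apply: ler_piMl => //; rewrite -addn1 natrD in lt_trunc; lra.
Qed.

Lemma W_B_real_le_nat (n m : X -> nat) Psi :
  W_B_real (fun x => (n x)%:R) (fun y => (m y)%:R) Psi <= W_B_nat n m Psi + l1norm Psi.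
Proof.
apply: W_B_real_le => // nu nu_feas; rewrite -lerBlDr.
apply: le_trans (bip_surplus_truncn Psi nu_feas.1) _.
exact/W_B_nat_ge/bip_feasible_nat_truncn.
Qed.

End BipartiteWelfare.

Section Roommates.
Variables (R : realType) (X : finType) (Phi : X -> X -> R).
Hypothesis Phi_sym : forall x y, Phi x y = Phi y x.

Local Notation Psi := (fun x y => Phi x y / 2).

Definition bip_of_room (mu : X -> X -> nat) x y : nat :=
  if x == y then (2 * mu x x)%N else mu x y.

Definition room_of_bip (nu : X -> X -> nat) x y : nat :=
  if x == y then (nu x x)./2 else (nu x y + nu y x)./2.

Lemma S_R_bip_of_room mu :
  S_R mu Phi = bip_surplus Psi (fun x y => (bip_of_room mu x y)%:R).
Proof.
rewrite /S_R /bip_surplus -big_split; apply: eq_bigr => x _ /=.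
rewrite [RHS](bigD1 x) //= /bip_of_room eqxx natrM; congr (_ + _); first by field.
by apply: eq_bigr => y y_neq_x; rewrite eq_sym (negbTE y_neq_x) mulrA.
Qed.

Lemma bip_of_room_feasible (n : X -> nat) mu :
  roommate_feasible n mu -> bip_feasible_nat n n (bip_of_room mu).
Proof.
move=> [mu_sym cap]; split=> [x|y].
  rewrite (bigD1 x) //= /bip_of_room eqxx.
  rewrite (eq_bigr (fun y => mu x y)) ?cap // => y.
  by move=> y_neq_x; rewrite eq_sym (negbTE y_neq_x).
rewrite (bigD1 y) //= /bip_of_room eqxx.
by rewrite (eq_bigr (fun x => mu y x)) ?cap // => x /negbTE ->.
Qed.

Lemma room_of_bip_feasible (n : X -> nat) nu :
  bip_feasible_nat n n nu -> roommate_feasible n (room_of_bip nu).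
Proof.
move=> [row col]; split=> [x y|x].
  by rewrite /room_of_bip eq_sym; case: eqP => [->|_] //; rewrite addnC.
rewrite /room_of_bip eqxx (eq_bigr (fun y => (nu x y + nu y x)./2)) => [|y y_neq_x].
  have row_x := row x; have col_x := col x.
  rewrite (bigD1 x) //= in row_x; rewrite (bigD1 x) //= in col_x.
  have half_sum : (2 * \sum_(y | y != x) (nu x y + nu y x)./2
      <= \sum_(y | y != x) nu x y + \sum_(y | y != x) nu y x)%N.
    by rewrite -big_split big_distrr /=; apply: leq_sum => y _; lia.
  lia.
by rewrite eq_sym (negbTE y_neq_x).
Qed.

Lemma bip_surplus_room_of_bip nu :
  bip_surplus Psi (fun x y => (nu x y)%:R) - l1norm Psi
    <= bip_surplus Psi (fun x y => (bip_of_room (room_of_bip nu) x y)%:R).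
Proof.
have transpose :
    bip_surplus Psi (fun x y => (nu y x)%:R) = bip_surplus Psi (fun x y => (nu x y)%:R).
  rewrite /bip_surplus exchange_big; apply: eq_bigr => y _.
  by apply: eq_bigr => x _; rewrite Phi_sym.
have -> : bip_surplus Psi (fun x y => (nu x y)%:R)
    = \sum_x \sum_y (nu x y + nu y x)%:R / 2 * Psi x y.
  transitivity ((bip_surplus Psi (fun x y => (nu x y)%:R)
                 + bip_surplus Psi (fun x y => (nu y x)%:R)) / 2).
    by rewrite transpose; field.
  rewrite /bip_surplus -big_split mulr_suml; apply: eq_bigr => x _.
  by rewrite -big_split mulr_suml; apply: eq_bigr => y _; rewrite natrD /=; ring.
rewrite lerBlDl -lerBlDr /bip_surplus /l1norm -sumrB.
apply: ler_sum => x _; rewrite -sumrB; apply: ler_sum => y _.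
set w := bip_of_room (room_of_bip nu) x y.
have /andP[w_le w_ge] : (w + w <= nu x y + nu y x <= w + w + 2)%N.
  rewrite /w /bip_of_room /room_of_bip.
  by case: eqP => [<-|_]; rewrite ?eqxx; apply/andP; split; lia.
rewrite -(ler_nat R) natrD in w_le; rewrite -(ler_nat R) !natrD in w_ge.
rewrite -mulrBl; set c := _ - _.
have c_ge0 : 0 <= c by rewrite /c; lra.
have c_le1 : c <= 1 by rewrite /c; lra.
apply: le_trans (ler_wpM2l c_ge0 (ler_norm _)) _.
exact: ler_piMl.
Qed.

Lemma W_P_le_W_B_nat (n : X -> nat) : W_P n Phi <= W_B_nat n n Psi.
Proof.
apply: sup_image_le (fun _ _ => 0%N) _ _; first by split=> // x; rewrite big1.
by move=> mu /bip_of_room_feasible; rewrite S_R_bip_of_room; exact: W_B_nat_ge.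
Qed.

Lemma W_B_nat_le_W_P (n : X -> nat) : W_B_nat n n Psi <= W_P n Phi + l1norm Psi.
Proof.
apply: W_B_nat_le => nu nu_feas; rewrite -lerBlDr.
apply: le_trans (bip_surplus_room_of_bip nu) _; rewrite -S_R_bip_of_room.
apply: (le_sup_image (F := fun mu => S_R mu Phi) (b := W_B_nat n n Psi)).
  by move=> mu /bip_of_room_feasible; rewrite S_R_bip_of_room; exact: W_B_nat_ge.
exact: room_of_bip_feasible.
Qed.

Lemma normalized_welfare_sandwich (n : X -> nat) (f : X -> R) (N : R) :
  (forall x, 0 <= f x) -> 0 < N ->
  let V := W_B_real f f Psi in
  let e := 2 * l1norm Psi * (\sum_x `|(n x)%:R / N - f x| + N^-1) in
  (V - e <= W_P n Phi / N <= V + e) /\ (V - e <= W_B_nat n n Psi / N <= V + e).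
Proof.
move=> f_ge0 N_gt0 V e.
have Ninv_gt0 : 0 < N^-1 by rewrite invr_gt0.
have Ninv_ge0 := ltW Ninv_gt0.
have n_ge0 x : 0 <= (n x)%:R :> R by [].
have g_ge0 x : 0 <= (n x)%:R / N by rewrite divr_ge0 // ltW.
have scaled := W_B_realZ Psi n_ge0 n_ge0 Ninv_gt0.
have up := W_B_real_perturb Psi g_ge0 g_ge0 f_ge0 f_ge0.
have down := W_B_real_perturb Psi f_ge0 f_ge0 g_ge0 g_ge0.
have dist_sym : \sum_x `|f x - (n x)%:R / N| = \sum_x `|(n x)%:R / N - f x|.
  by apply: eq_bigr => x _; exact: distrC.
rewrite dist_sym in down.
rewrite scaled -/V in up down.
have WP_WB := ler_wpM2r Ninv_ge0 (W_P_le_W_B_nat n).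
have WB_WP := ler_wpM2r Ninv_ge0 (W_B_nat_le_W_P n).
have WB_real := ler_wpM2r Ninv_ge0 (W_B_nat_le_real n n Psi).
have real_WB := ler_wpM2r Ninv_ge0 (W_B_real_le_nat n n Psi).
have MN_ge0 := mulr_ge0 (l1norm_ge0 Psi) Ninv_ge0.
rewrite /e; split; apply/andP; split; lra.
Qed.

End Roommates.

Lemma cvg_sum_dist0 (R : realFieldType) (T : Type) (F : set_system T) (FF : Filter F)
    (X : finType) (u : T -> X -> R) (l : X -> R) :
  (forall x, u ^~ x @ F --> l x) -> (fun t => \sum_x `|u t x - l x|) @ F --> 0.
Proof.
move=> u_cvg.
have := @cvg_big R X +%R 0 xpredT add_continuous T F (index_enum X)
  (fun x t => `|u t x - l x|) (fun _ => 0) FF.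
rewrite big1_eq; apply=> x _.
by apply/norm_cvg0P/subr_cvg0; exact: u_cvg.
Qed.

Theorem proposition2 (R : realType) (X : finType) (x0 : X)
  (Phi : X -> X -> R) (Phi_sym : forall x y, Phi x y = Phi y x)
  (n : nat -> X -> nat) (f : X -> R)
  (hN : (fun k => ((\sum_x n k x)%N)%:R : R) @ \oo --> +oo)
  (hf : forall x, (fun k => (n k x)%:R / ((\sum_y n k y)%N)%:R : R) @ \oo --> f x) :
  ((fun k => W_P (n k) Phi / ((\sum_x n k x)%N)%:R) @ \oo
     --> W_B_real f f (fun x y => Phi x y / 2)) /\
  ((fun k => W_B_nat (n k) (n k) (fun x y => Phi x y / 2) / ((\sum_x n k x)%N)%:R) @ \oo
     --> W_B_real f f (fun x y => Phi x y / 2)).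
Proof.
have f_ge0 x : 0 <= f x.
  by apply: (cvgr_to_ge (hf x)); apply: nearW => k; rewrite divr_ge0.
pose Psi := fun x y => Phi x y / 2.
pose V := W_B_real f f Psi.
pose N k : R := ((\sum_x n k x)%N)%:R.
pose e k := 2 * l1norm Psi * (\sum_x `|(n k x)%:R / N k - f x| + (N k)^-1).
have N_gt0 : \forall k \near \oo, 0 < N k by exact: cvgry_gt hN 0.
have e_cvg0 : e @ \oo --> 0.
  rewrite [L in _ --> L](_ : 0 = 2 * l1norm Psi * (0 + 0)); last by rewrite addr0 mulr0.
  apply: cvgM; first exact: cvg_cst.
  apply: cvgD; first exact: cvg_sum_dist0.
  exact/(gtr0_cvgV0 N_gt0).
have sandwich : \forall k \near \oo,
    (V - e k <= W_P (n k) Phi / N k <= V + e k) /\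
    (V - e k <= W_B_nat (n k) (n k) Psi / N k <= V + e k).
  by apply: filterS N_gt0 => k /(normalized_welfare_sandwich Phi_sym (n k) f_ge0).
have lower : (fun k => V - e k) @ \oo --> V.
  by rewrite -[L in _ --> L]subr0; apply: cvgB e_cvg0; exact: cvg_cst.
have upper : (fun k => V + e k) @ \oo --> V.
  by rewrite -[L in _ --> L]addr0; apply: cvgD e_cvg0; exact: cvg_cst.
by split; apply: (squeeze_cvgr _ lower upper); apply: filterS sandwich => k [].
Qed.
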